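(* Let $\langle S\mid R\rangle\cong\mathbb{Z}^n$ be a 3-presentation such that $|S|$ is minimal among all 3-presentations of $\mathbb{Z}^n$, and fix an isomorphism $\phi:\langle S\mid R\rangle\to\mathbb{Z}^n$. Then for each $r\in R$ whose normal form is not the empty word, the normal form of $r$ is $g^ah^bi^c$ with $g,h,i\in S$ distinct and $a,b,c\neq0$, and $\dim r=2$.
   Context: A 3-presentation of a group $G$ is a group presentation $\langle S\mid R\rangle\cong G$ (with $S,R$ finite) in which each relation is the empty word, $g^a$, $g^ah^b$, or $g^ah^bi^c$ with $g,h,i\in S$ and $a,b,c\in\mathbb{Z}$. Such a word is in normal form if its generators are distinct and its exponents nonzero; every relation $r$ is conjugate in the free group on $S$ to a normal-form word $w$, unique up to cyclic permutation, and we write $r\leadsto w$. Given the isomorphism $\phi$, for $S'\subseteq S$ let $\dim S'=\dim\operatorname{span}_{\mathbb{R}}\{\phi(g):g\in S'\}$, viewing $\phi(g)\in\mathbb{Z}^n\subseteq\mathbb{R}^n$; for $r\in R$ with $r\leadsto\prod_i g_i^{a_i}$, $\dim r=\dim\{g_i\}$. *)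

From HB Require Import structures.
From mathcomp Require Import all_boot all_order all_algebra.
From mathcomp Require Import reals.
Set Implicit Arguments. Unset Strict Implicit. Unset Printing Implicit Defensive.
Import Order.TTheory GRing.Theory Num.Theory.
Local Open Scope ring_scope.

(* Generators S = 'I_m.  A letter is a generator together with a flag
   (false = g, true = g^-1); words over S^{+-1} are sequences of letters. *)
Definition letter (m : nat) := ('I_m * bool)%type.
Definition word (m : nat) := seq (letter m).

Definition inv_letter m (x : letter m) : letter m := (x.1, ~~ x.2).
Definition inv_word m (w : word m) : word m := rev (map (@inv_letter m) w).

Definition pow_word m (p : 'I_m * int) : word m :=
  match p.2 with
  | Posz k => nseq k (p.1, false)
  | Negz k => nseq k.+1 (p.1, true)
  end.

Definition syl_word m (r : seq ('I_m * int)) : word m :=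
  flatten (map (@pow_word m) r).

(* Equality in the group <S | rels>: the smallest congruence on words
   (w.r.t. concatenation) making x x^-1 = 1 and every relator = 1. *)
Inductive pres_eq (m : nat) (rels : seq (word m)) : word m -> word m -> Prop :=
| pe_refl w : pres_eq rels w w
| pe_sym w1 w2 : pres_eq rels w1 w2 -> pres_eq rels w2 w1
| pe_trans w1 w2 w3 : pres_eq rels w1 w2 -> pres_eq rels w2 w3 -> pres_eq rels w1 w3
| pe_cat u1 u2 v1 v2 : pres_eq rels u1 v1 -> pres_eq rels u2 v2 ->
    pres_eq rels (u1 ++ u2) (v1 ++ v2)
| pe_free (x : letter m) : pres_eq rels [:: x; inv_letter x] [::]
| pe_rel r : r \in rels -> pres_eq rels r [::].

Definition free_eq m (w1 w2 : word m) := pres_eq [::] w1 w2.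

Definition three_pres m (rels : seq (seq ('I_m * int))) : bool :=
  all (fun r => size r <= 3)%N rels.

Definition eval_word m n (v : 'I_m -> 'rV[int]_n) (w : word m) : 'rV[int]_n :=
  \sum_(x <- w) (if x.2 then - v x.1 else v x.1).

(* The assignment g |-> v g induces an isomorphism phi : <S | rels> -> Z^n:
   it is well defined (relators map to 0), surjective and injective.
   (Every homomorphism out of <S|rels> is determined by such a v.) *)
Definition pres_iso m n (rels : seq (seq ('I_m * int))) (v : 'I_m -> 'rV[int]_n)
  : Prop :=
  [/\ forall r, r \in rels -> eval_word v (syl_word r) = 0,
      forall y : 'rV[int]_n, exists w : word m, eval_word v w = y
    & forall w1 w2 : word m, eval_word v w1 = eval_word v w2 ->
        pres_eq (map (@syl_word m) rels) w1 w2].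

Definition normal_form m (w : seq ('I_m * int)) : bool :=
  uniq (map fst w) && all (fun p => p.2 != 0) w.

(* r ~> w : r is conjugate in the free group to the normal-form word w. *)
Definition leadsto m (r w : seq ('I_m * int)) : Prop :=
  normal_form w /\
  exists u : word m, free_eq (u ++ syl_word r ++ inv_word u) (syl_word w).

(* dim S' = dim span_R {phi g : g in S'}, with Z^n inside R^n. *)
Definition dimR (R : realType) m n (v : 'I_m -> 'rV[int]_n) (gs : seq 'I_m) : nat :=
  \dim (<< [seq map_mx (fun z : int => z%:~R : R) (v g) | g <- gs] >>)%VS.

From HB Require Import structures.
From mathcomp Require Import all_boot all_order all_algebra.
From mathcomp Require Import reals zify ring.
Set Implicit Arguments. Unset Strict Implicit. Unset Printing Implicit Defensive.
Import Order.TTheory GRing.Theory Num.Theory.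
Local Open Scope ring_scope.

(* The proof rests on two Tietze reductions, each producing a 3-presentation
   of the same group Z^n with one generator fewer:
   - a generator g with phi(g) = 0 can be deleted;
   - two distinct generators g, h whose images satisfy a nontrivial relation
     a phi(g) + b phi(h) = 0 can be merged: writing phi(g) = p u, phi(h) = q u
     with s p + t q = 1, a new generator x for u replaces them via
     g |-> x^p, h |-> x^q and x |-> g^s h^t.
   Both are instances of a general transfer lemma: mutually inverse word
   substitutions compatible with the maps to Z^n carry one presentation to
   the other.  In a minimal presentation, therefore, all phi(g) are nonzero
   and any two of them are linearly independent.  A relation r ~> w has the
   same image in Z^n as w, and every generator of w occurs in r, so w has at
   most three syllables; its image vanishes, so independence rules out one
   or two syllables and forces dim w = 2 for three syllables. *)

Section Words.
Variable m : nat.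
Implicit Types (w u : word m) (x : letter m).

Lemma inv_letterK x : inv_letter (inv_letter x) = x.
Proof. by case: x => g b; rewrite /inv_letter /= negbK. Qed.

Lemma inv_word_cat u w : inv_word (u ++ w) = inv_word w ++ inv_word u.
Proof. by rewrite /inv_word map_cat rev_cat. Qed.

Lemma inv_wordK w : inv_word (inv_word w) = w.
Proof.
rewrite /inv_word map_rev revK -map_comp.
by rewrite (eq_map (g := id)) ?map_id // => x /=; rewrite inv_letterK.
Qed.

Lemma inv_word_cons x w : inv_word (x :: w) = inv_word w ++ [:: inv_letter x].
Proof. by rewrite -cat1s inv_word_cat. Qed.

Lemma pres_cancel rels u : pres_eq rels (u ++ inv_word u) [::].
Proof.
elim: u => [|x u IH] /=; first exact: pe_refl.
rewrite inv_word_cons.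
have -> : x :: u ++ inv_word u ++ [:: inv_letter x] =
  [:: x] ++ ((u ++ inv_word u) ++ [:: inv_letter x]) by rewrite /= catA.
apply: pe_trans (pe_free rels x).
have -> : [:: x; inv_letter x] = [:: x] ++ ([::] ++ [:: inv_letter x]) by [].
by apply: pe_cat; [apply: pe_refl | apply: pe_cat => //; apply: pe_refl].
Qed.

Lemma free_sub rels w1 w2 : free_eq w1 w2 -> pres_eq rels w1 w2.
Proof.
elim=> {w1 w2} //.
- by move=> w; apply: pe_refl.
- by move=> ? ? _ H; apply: pe_sym.
- by move=> ? ? ? _ H1 _ H2; apply: pe_trans H1 H2.
- by move=> ? ? ? ? _ H1 _ H2; apply: pe_cat.
- by move=> x; apply: pe_free.
Qed.

Lemma free_inv w1 w2 : free_eq w1 w2 -> free_eq (inv_word w1) (inv_word w2).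
Proof.
elim=> {w1 w2} //.
- by move=> w; apply: pe_refl.
- by move=> ? ? _ H; apply: pe_sym.
- by move=> ? ? ? _ H1 _ H2; apply: pe_trans H1 H2.
- by move=> ? ? ? ? _ H1 _ H2; rewrite !inv_word_cat; apply: pe_cat.
- move=> x; change (free_eq [:: inv_letter (inv_letter x); inv_letter x] [::]).
  by rewrite inv_letterK; apply: pe_free.
Qed.

Definition evalz (V : zmodType) (f : 'I_m -> V) w : V :=
  \sum_(x <- w) (if x.2 then - f x.1 else f x.1).

Lemma evalz_cat (V : zmodType) (f : 'I_m -> V) u w :
  evalz f (u ++ w) = evalz f u + evalz f w.
Proof. by rewrite /evalz big_cat. Qed.

Lemma evalz_inv (V : zmodType) (f : 'I_m -> V) w : evalz f (inv_word w) = - evalz f w.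
Proof.
rewrite /evalz /inv_word big_rev big_map -sumrN; apply: eq_bigr => x _.
by case: x => g [] /=; rewrite ?opprK.
Qed.

Lemma evalz_pres (V : zmodType) (f : 'I_m -> V) rels w1 w2 :
  (forall r, r \in rels -> evalz f r = 0) ->
  pres_eq rels w1 w2 -> evalz f w1 = evalz f w2.
Proof.
move=> Hr; elim=> {w1 w2} //.
- by move=> ? ? ? _ -> _ ->.
- by move=> ? ? ? ? _ H1 _ H2; rewrite !evalz_cat H1 H2.
- move=> [g b]; rewrite /evalz !big_cons big_nil /=.
  by case: b => /=; rewrite ?opprK addr0 ?subrr // addNr.
- by move=> r /Hr ->; rewrite /evalz big_nil.
Qed.

Lemma evalz_pow (V : zmodType) (f : 'I_m -> V) (p : 'I_m * int) :
  evalz f (pow_word p) = f p.1 *~ p.2.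
Proof.
have Hn b j : evalz f (nseq j (p.1, b)) = (if b then - f p.1 else f p.1) *+ j.
  elim: j => [|j IH]; first by rewrite /evalz big_nil.
  by rewrite mulrS -IH /evalz big_cons.
case: p Hn => g [k|k] Hn; rewrite /pow_word Hn //=.
by rewrite NegzE mulrNz mulNrn.
Qed.

Lemma syl_word_cons (p : 'I_m * int) r : syl_word (p :: r) = pow_word p ++ syl_word r.
Proof. by []. Qed.

Lemma evalz_syl (V : zmodType) (f : 'I_m -> V) r :
  evalz f (syl_word r) = \sum_(p <- r) f p.1 *~ p.2.
Proof.
elim: r => [|p r IH]; first by rewrite /evalz !big_nil.
by rewrite syl_word_cons evalz_cat evalz_pow big_cons IH.
Qed.

Lemma eval_wordE n (v : 'I_m -> 'rV[int]_n) w : eval_word v w = evalz v w.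
Proof. by []. Qed.

Lemma pow_inv (g : 'I_m) p : inv_word (pow_word (g, p)) = pow_word (g, - p).
Proof.
rewrite /inv_word /pow_word /=.
case: p => [[|k]|k] //=.
  by rewrite -[_ :: _]/(map (@inv_letter m) (nseq k.+1 (g,false))) map_nseq rev_nseq.
by rewrite -[_ :: _]/(map (@inv_letter m) (nseq k.+1 (g,true))) map_nseq rev_nseq.
Qed.

Lemma nseqSr (T : Type) k (x : T) : x :: nseq k x = nseq k x ++ [:: x].
Proof. by elim: k => //= k ->. Qed.

Lemma pow_succ (g : 'I_m) p :
  free_eq (pow_word (g, p) ++ [:: (g, false)]) (pow_word (g, p + 1)).
Proof.
case: p => [k|[|k]].
- by rewrite /pow_word /= nseqD; apply: pe_refl.
- by rewrite /pow_word /=; apply: (pe_free [::] (g, true)).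
have -> : Negz k.+1 + 1 = Negz k by rewrite !NegzE; lia.
rewrite /pow_word /= -[X in free_eq _ X]cats0.
have -> : (g, true) :: (g, true) :: nseq k (g, true) ++ [:: (g, false)] =
   ((g, true) :: nseq k (g, true)) ++ [:: (g, true); (g, false)].
  by congr cons; elim: k => //= k ->.
by apply: pe_cat; [apply: pe_refl | apply: (pe_free [::] (g, true))].
Qed.

Lemma pow_pred (g : 'I_m) p :
  free_eq (pow_word (g, p) ++ [:: (g, true)]) (pow_word (g, p - 1)).
Proof.
case: p => [[|k]|k].
- by rewrite /pow_word /=; apply: pe_refl.
- have -> : Posz k.+1 - 1 = Posz k by lia.
  rewrite /pow_word /= -[X in free_eq _ X]cats0.
  have -> : (g, false) :: nseq k (g, false) ++ [:: (g, true)] =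
     nseq k (g, false) ++ [:: (g, false); (g, true)] by elim: k => //= k ->.
  by apply: pe_cat; [apply: pe_refl | apply: (pe_free [::] (g, false))].
- have -> : Negz k - 1 = Negz k.+1 by rewrite !NegzE; lia.
  by rewrite /pow_word /= [(g, true) :: nseq k _]nseqSr; apply: pe_refl.
Qed.

Lemma pow_add (g : 'I_m) p q :
  free_eq (pow_word (g, p) ++ pow_word (g, q)) (pow_word (g, p + q)).
Proof.
case: q => [k|k]; elim: k => [|k IH].
- by rewrite /= cats0 addr0; apply: pe_refl.
- have -> : pow_word (g, Posz k.+1) = pow_word (g, Posz k) ++ [:: (g, false)].
    by rewrite /pow_word /= nseqSr.
  rewrite catA; apply: pe_trans (pe_cat IH (pe_refl _ _)) _.
  have -> : p + Posz k.+1 = (p + Posz k) + 1 by lia.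
  exact: pow_succ.
- exact: pow_pred.
- have -> : pow_word (g, Negz k.+1) = pow_word (g, Negz k) ++ [:: (g, true)].
    by rewrite /pow_word /= [(g, true) :: nseq k _]nseqSr.
  rewrite catA; apply: pe_trans (pe_cat IH (pe_refl _ _)) _.
  have -> : p + Negz k.+1 = (p + Negz k) - 1 by rewrite !NegzE; lia.
  exact: pow_pred.
Qed.

End Words.

Section Substitution.
Variables m m' : nat.
Variable fg : 'I_m -> word m'.

Definition ext (x : letter m) : word m' := if x.2 then inv_word (fg x.1) else fg x.1.
Definition hom (w : word m) : word m' := flatten (map ext w).

Lemma hom_cat u w : hom (u ++ w) = hom u ++ hom w.
Proof. by rewrite /hom map_cat flatten_cat. Qed.

Lemma hom_cons x w : hom (x :: w) = ext x ++ hom w.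
Proof. by []. Qed.

Lemma ext_inv x : ext (inv_letter x) = inv_word (ext x).
Proof. by case: x => g [] //=; rewrite /ext /= inv_wordK. Qed.

Lemma hom_inv w : hom (inv_word w) = inv_word (hom w).
Proof.
elim: w => [|x w IH] //.
by rewrite inv_word_cons hom_cat IH hom_cons inv_word_cat /hom /= cats0 ext_inv.
Qed.

Lemma evalz_hom (V : zmodType) (f : 'I_m -> V) (f' : 'I_m' -> V) w :
  (forall g, evalz f' (fg g) = f g) -> evalz f' (hom w) = evalz f w.
Proof.
move=> Hf; elim: w => [|x w IH]; first by rewrite /evalz !big_nil.
have Hx : evalz f' (ext x) = (if x.2 then - f x.1 else f x.1).
  by case: x => g [] /=; rewrite /ext /= ?evalz_inv Hf.
by rewrite hom_cons evalz_cat IH Hx /evalz big_cons.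
Qed.

Lemma pres_hom rels rels' w1 w2 :
  (forall r, r \in rels -> pres_eq rels' (hom r) [::]) ->
  pres_eq rels w1 w2 -> pres_eq rels' (hom w1) (hom w2).
Proof.
move=> Hr; elim=> {w1 w2}.
- by move=> w; apply: pe_refl.
- by move=> ? ? _ H; apply: pe_sym.
- by move=> ? ? ? _ H1 _ H2; apply: pe_trans H1 H2.
- by move=> ? ? ? ? _ H1 _ H2; rewrite !hom_cat; apply: pe_cat.
- by move=> x; rewrite !hom_cons /hom /= cats0 ext_inv; apply: pres_cancel.
- by move=> r /Hr.
Qed.

Lemma hom_pow (x : 'I_m) (y : 'I_m') p c :
  fg x = pow_word (y, p) -> free_eq (hom (pow_word (x, c))) (pow_word (y, p * c)).
Proof.
move=> Hx.
have H b j : free_eq (hom (nseq j (x, b))) (pow_word (y, (if b then - p else p) * j%:Z)).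
  elim: j => [|j IH]; first by rewrite mulr0; apply: pe_refl.
  rewrite -[nseq j.+1 _]/((x, b) :: nseq j (x, b)) hom_cons.
  apply: pe_trans (pe_cat (pe_refl _ _) IH) _.
  have -> : ext (x, b) = pow_word (y, if b then - p else p).
    by case: b {IH}; rewrite /ext /= Hx // pow_inv.
  apply: pe_trans (pow_add _ _ _) _.
  have -> : (if b then - p else p) + (if b then - p else p) * j%:Z =
            (if b then - p else p) * j.+1%:Z by case: b {IH}; lia.
  exact: pe_refl.
case: c => [j|j]; first exact: H false j.
have := H true j.+1.
by have -> : - p * j.+1%:Z = p * Negz j by rewrite NegzE; lia.
Qed.

End Substitution.

Lemma hom_comp m1 m2 m3 (f1 : 'I_m2 -> word m3) (f2 : 'I_m1 -> word m2) w :
  hom f1 (hom f2 w) = hom (fun g => hom f1 (f2 g)) w.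
Proof.
elim: w => [|x w IH] //.
rewrite !hom_cons hom_cat IH; congr (_ ++ _).
by case: x => g [] //=; rewrite /ext /= hom_inv.
Qed.

Lemma hom_id_free m (F : 'I_m -> word m) w :
  (forall g, free_eq (F g) [:: (g, false)]) -> free_eq (hom F w) w.
Proof.
move=> HF; elim: w => [|x w IH]; first exact: pe_refl.
rewrite hom_cons -cat1s; apply: pe_cat => //.
case: x => g [] /=; rewrite /ext /=; last exact: HF.
by rewrite -[[:: (g, true)]]/(inv_word [:: (g, false)]); apply: free_inv.
Qed.

Lemma scale_intE n (x : 'rV[int]_n) (c : int) : x *~ c = c *: x.
Proof. by rewrite -scaler_int intz. Qed.

(* The Tietze transfer lemma: a presentation <S | rels> of Z^n via v is
   carried to a presentation <S' | subst rels> via v' by substitutions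
   fg : S -> F(S') and psi : S' -> F(S) compatible with v, v', such that
   fg o psi is the identity and fg rewrites each relator r to subst r. *)
Section TietzeTransfer.
Variables (n m k : nat) (rels : seq (seq ('I_m * int))).
Variables (v : 'I_m -> 'rV[int]_n) (v' : 'I_k -> 'rV[int]_n).
Variables (fg : 'I_m -> word k) (psi : 'I_k -> word m).
Variable subst : seq ('I_m * int) -> seq ('I_k * int).
Hypothesis fgE : forall x, evalz v' (fg x) = v x.
Hypothesis psiE : forall y, evalz v (psi y) = v' y.
Hypothesis fg_psi : forall y, free_eq (hom fg (psi y)) [:: (y, false)].
Hypothesis substE : forall r, free_eq (hom fg (syl_word r)) (syl_word (subst r)).
Hypothesis subst_size : forall r, (size (subst r) <= size r)%N.

Lemma tietze_transfer :
  three_pres rels -> pres_iso rels v ->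
  three_pres (map subst rels) /\ pres_iso (map subst rels) v'.
Proof.
move=> T3 [Hrel Hsurj Hinj]; split.
  move: T3; rewrite /three_pres all_map; apply: sub_all => r /=.
  exact: leq_trans (subst_size r).
have evalz_subst r : evalz v' (syl_word (subst r)) = evalz v (syl_word r).
  by rewrite -(evalz_pres (rels := [::]) _ (substE r)) // (evalz_hom _ fgE).
split.
- by move=> _ /mapP [r Hr ->]; rewrite eval_wordE evalz_subst; apply: Hrel.
- by move=> y; have [w <-] := Hsurj y; exists (hom fg w); rewrite !eval_wordE (evalz_hom _ fgE).
move=> w1 w2; rewrite !eval_wordE => E.
have /Hinj Hpsi : eval_word v (hom psi w1) = eval_word v (hom psi w2).
  by rewrite !eval_wordE !(evalz_hom _ psiE).
have P : pres_eq (map (@syl_word k) (map subst rels))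
    (hom fg (hom psi w1)) (hom fg (hom psi w2)).
  apply: pres_hom Hpsi => _ /mapP [r Hr ->].
  apply: pe_trans (free_sub _ (substE r)) _.
  by apply: pe_rel; apply: map_f; apply: map_f.
rewrite !hom_comp in P.
apply: pe_trans (pe_trans P _); last exact/free_sub/hom_id_free.
by apply/pe_sym/free_sub/hom_id_free.
Qed.

End TietzeTransfer.

Definition smaller_three_pres (n m : nat) : Prop :=
  exists m' (rels' : seq (seq ('I_m' * int))) (v' : 'I_m' -> 'rV[int]_n),
    [/\ (m' < m)%N, three_pres rels' & pres_iso rels' v'].

(* A generator with trivial image can be deleted: it is sent to the empty
   word and erased from every relator. *)
Lemma drop_zero_generator n m (rels : seq (seq ('I_m * int)))
    (v : 'I_m -> 'rV[int]_n) (g : 'I_m) :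
  v g = 0 -> three_pres rels -> pres_iso rels v -> smaller_three_pres n m.
Proof.
case: m rels v g => [|k] rels v g; first by case: g.
move=> vg0 T3 Hiso.
pose fg (x : 'I_k.+1) : word k := if unlift g x is Some y then pow_word (y, 1) else [::].
pose psi (y : 'I_k) : word k.+1 := pow_word (lift g y, 1).
pose subst (r : seq ('I_k.+1 * int)) :=
  pmap (fun e => omap (fun y => (y, e.2)) (unlift g e.1)) r.
have fgE x : evalz (v \o lift g) (fg x) = v x.
  rewrite /fg; have [y ->|->] := unliftP g x; first by rewrite evalz_pow.
  by rewrite vg0 /evalz big_nil.
have psiE y : evalz v (psi y) = (v \o lift g) y by rewrite evalz_pow.
have fg_psi y : free_eq (hom fg (psi y)) [:: (y, false)].
  by rewrite /hom /= /ext /= /fg liftK cats0; apply: pe_refl.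
have hom_g b j : hom fg (nseq j (g, b)) = [::].
  elim: j => [|j IH] //; rewrite -[nseq j.+1 _]/((g, b) :: nseq j (g, b)).
  by rewrite hom_cons IH cats0 /ext /fg unlift_none; case: b {IH}.
have substE r : free_eq (hom fg (syl_word r)) (syl_word (subst r)).
  elim: r => [|[x c] r IH]; first exact: pe_refl.
  rewrite syl_word_cons hom_cat; have [y ->|->] := unliftP g x.
    rewrite /subst /= liftK /= -/(subst r) syl_word_cons.
    apply: pe_cat IH; have := hom_pow (fg := fg) (x := lift g y) (y := y) (p := 1) c.
    by rewrite mul1r; apply; rewrite /fg liftK.
  rewrite /subst /= unlift_none /= -/(subst r).
  suff -> : hom fg (pow_word (g, c)) = [::] by [].
  by case: c {IH} => j; apply: hom_g.
have subst_size r : (size (subst r) <= size r)%N by rewrite size_pmap count_size.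
have [T3' Hiso'] := tietze_transfer fgE psiE fg_psi substE subst_size T3 Hiso.
by exists k, (map subst rels), (v \o lift g).
Qed.

Lemma dependent_pair_factor n (x y : 'rV[int]_n) (a b : int) :
  (a != 0) || (b != 0) -> a *: x + b *: y = 0 ->
  exists (u : 'rV[int]_n) (p q s t : int),
    [/\ s * p + t * q = 1, x = p *: u & y = q *: u].
Proof.
move=> nz Rel; set d := gcdz a b.
have dn0 : d != 0 by rewrite /d gcdz_eq0 negb_and.
have [s0 [t0 Bz]] := Bezoutz a b.
have Ea := divzK (dvdz_gcdl a b); have Eb := divzK (dvdz_gcdr a b).
rewrite -/d in Ea Eb Bz.
set a' := (a %/ d)%Z in Ea *; set b' := (b %/ d)%Z in Eb *.
have Bz' : s0 * a' + t0 * b' = 1.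
  by apply: (mulIf dn0); rewrite mulrDl -!mulrA Ea Eb Bz mul1r.
have Rel' j : a' * x 0 j + b' * y 0 j = 0.
  apply: (mulIf dn0); move/rowP: Rel => /(_ j); rewrite !mxE -Ea -Eb mul0r => <-.
  by ring.
exists (t0 *: x - s0 *: y), b', (- a'), t0, (- s0); split.
- by rewrite -Bz'; ring.
- apply/rowP => j; rewrite !mxE.
  transitivity (s0 * (a' * x 0 j + b' * y 0 j) + b' * (t0 * x 0 j - s0 * y 0 j)).
    by rewrite -[LHS]mul1r -Bz'; ring.
  by rewrite Rel' mulr0 add0r.
- apply/rowP => j; rewrite !mxE.
  transitivity (t0 * (a' * x 0 j + b' * y 0 j) - a' * (t0 * x 0 j - s0 * y 0 j)).
    by rewrite -[LHS]mul1r -Bz'; ring.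
  by rewrite Rel' mulr0 add0r mulNr.
Qed.

(* Two generators g, h with images p u and q u, where s p + t q = 1, can be
   merged into one generator x with image u, via g |-> x^p, h |-> x^q,
   x |-> g^s h^t; the other generators are kept. *)
Lemma merge_generators n m (rels : seq (seq ('I_m * int))) (v : 'I_m -> 'rV[int]_n)
    (g h : 'I_m) (p q s t : int) (u : 'rV[int]_n) :
  g != h -> s * p + t * q = 1 -> v g = p *: u -> v h = q *: u ->
  three_pres rels -> pres_iso rels v -> smaller_three_pres n m.
Proof.
case: m rels v g h => [|k] rels v g h; first by case: g.
have [h0 ->|->] := unliftP g h; last by rewrite eqxx.
move=> ngh Bz vg vh T3 Hiso.
pose sig (x : 'I_k.+1) : 'I_k * int :=
  if x == g then (h0, p) else if x == lift g h0 then (h0, q)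
  else (odflt h0 (unlift g x), 1).
pose fg (x : 'I_k.+1) : word k := pow_word (sig x).
pose v' (y : 'I_k) := if y == h0 then u else v (lift g y).
pose psi (y : 'I_k) : word k.+1 :=
  if y == h0 then pow_word (g, s) ++ pow_word (lift g h0, t) else pow_word (lift g y, 1).
pose subst (r : seq ('I_k.+1 * int)) := [seq ((sig e.1).1, (sig e.1).2 * e.2) | e <- r].
have fgE x : evalz v' (fg x) = v x.
  rewrite evalz_pow scale_intE /sig.
  case: eqP => [->|/eqP nxg]; first by rewrite /v' eqxx vg.
  case: eqP => [->|/eqP nxh]; first by rewrite /v' eqxx vh.
  case: (unliftP g x) nxg nxh => [y -> _ nyh|->]; last by rewrite eqxx.
  rewrite /= scale1r /v'; case: eqP => // eyh.
  by rewrite eyh eqxx in nyh.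
have psiE y : evalz v (psi y) = v' y.
  rewrite /psi /v'; case: eqP => _; last by rewrite evalz_pow.
  by rewrite evalz_cat !evalz_pow !scale_intE vg vh !scalerA -scalerDl Bz scale1r.
have fg_lift y : y != h0 -> fg (lift g y) = pow_word (y, 1).
  move=> nyh; rewrite /fg /sig eq_sym (negbTE (neq_lift g y)).
  by rewrite (inj_eq (@lift_inj _ g)) (negbTE nyh) liftK.
have fg_psi y : free_eq (hom fg (psi y)) [:: (y, false)].
  rewrite /psi; case: eqP => [->|/eqP nyh]; last first.
    by have := hom_pow 1 (fg_lift y nyh); rewrite mulr1.
  rewrite hom_cat.
  apply: pe_trans (pe_cat (hom_pow (y := h0) (p := p) s _)
                          (hom_pow (y := h0) (p := q) t _)) _.
  - by rewrite /fg /sig eqxx.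
  - by rewrite /fg /sig eq_sym (negbTE ngh) eqxx.
  apply: pe_trans (pow_add _ _ _) _.
  by rewrite [p * s]mulrC [q * t]mulrC Bz; apply: pe_refl.
have substE r : free_eq (hom fg (syl_word r)) (syl_word (subst r)).
  elim: r => [|[x c] r IH]; first exact: pe_refl.
  rewrite syl_word_cons hom_cat; apply: pe_cat IH.
  by apply: hom_pow; rewrite /fg; case: (sig x).
have subst_size r : (size (subst r) <= size r)%N by rewrite size_map.
have [T3' Hiso'] := tietze_transfer fgE psiE fg_psi substE subst_size T3 Hiso.
by exists k, (map subst rels), v'.
Qed.

Lemma dependent_pair_smaller n m (rels : seq (seq ('I_m * int)))
    (v : 'I_m -> 'rV[int]_n) (g h : 'I_m) (a b : int) :
  g != h -> (a != 0) || (b != 0) -> a *: v g + b *: v h = 0 ->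
  three_pres rels -> pres_iso rels v -> smaller_three_pres n m.
Proof.
move=> ngh nz /(dependent_pair_factor nz) [u [p [q [s [t [Bz vg vh]]]]]].
exact: merge_generators ngh Bz vg vh.
Qed.

Section MinimalPresentation.
Variables (n m : nat) (rels : seq (seq ('I_m * int))) (v : 'I_m -> 'rV[int]_n).
Hypothesis T3 : three_pres rels.
Hypothesis Hiso : pres_iso rels v.
Hypothesis Hmin : forall (m' : nat) (rels' : seq (seq ('I_m' * int)))
  (v' : 'I_m' -> 'rV[int]_n), three_pres rels' -> pres_iso rels' v' -> (m <= m')%N.

Lemma minimal_not_smaller : ~ smaller_three_pres n m.
Proof. by case=> m' [rels' [v' [lt_m'm T3' Hiso']]]; have := Hmin T3' Hiso'; rewrite leqNgt lt_m'm. Qed.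

Lemma minimal_nonzero g : v g != 0.
Proof.
by apply/eqP => vg0; apply: minimal_not_smaller; apply: drop_zero_generator vg0 T3 Hiso.
Qed.

Lemma minimal_independent g h (a b : int) :
  g != h -> a *: v g + b *: v h = 0 -> (a == 0) && (b == 0).
Proof.
move=> ngh Rel; apply/negPn/negP; rewrite negb_and => nz.
by apply: minimal_not_smaller; apply: dependent_pair_smaller ngh nz Rel T3 Hiso.
Qed.

End MinimalPresentation.

Section Dimension.
Variables (R : realType) (n m : nat) (v : 'I_m -> 'rV[int]_n).

Lemma rV_nz (x : 'rV[int]_n) : x != 0 -> exists j, x 0 j != 0.
Proof.
move=> nz; apply/existsP; apply: contraR nz; rewrite negb_exists => /forallP H.
by apply/eqP/rowP => j; rewrite mxE; apply/eqP; have := H j; rewrite negbK.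
Qed.

Lemma dimR_pair_dependent (g h : 'I_m) :
  (dimR R v [:: g; h] <= 1)%N ->
  exists a b : int, ((a != 0) || (b != 0)) /\ a *: v g + b *: v h = 0.
Proof.
rewrite /dimR /= => Hd.
have [vg0|nz] := eqVneq (v g) 0.
  by exists 1, 0; rewrite vg0 scaler0 scale0r addr0 oner_eq0.
have [j Hj] := rV_nz nz.
set vR := fun x => map_mx (fun z : int => z%:~R : R) (v x).
have vRg : vR g != 0.
  apply: contra Hj => /eqP/rowP/(_ j); rewrite !mxE => /eqP.
  by rewrite intr_eq0.
set U := (<< [:: vR g; vR h] >>)%VS.
have sub1 : (<[vR g]> <= U)%VS by rewrite -memvE memv_span // mem_head.
have eqU : <[vR g]>%VS = U.
  by apply/eqP; rewrite eqEdim sub1 /= dim_vline vRg.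
have : vR h \in <[vR g]>%VS by rewrite eqU memv_span // !inE eqxx orbT.
case/vlineP => lam Hl.
exists (- v h 0 j), (v g 0 j); split; first by rewrite Hj orbT.
apply/rowP => l; rewrite !mxE.
apply/eqP; rewrite -(intr_eq0 R) intrD !intrM intrN.
have Hl' y : (v h 0 y)%:~R = lam * (v g 0 y)%:~R :> R.
  have vRE x : vR x 0 y = (v x 0 y)%:~R by rewrite mxE.
  by rewrite -!vRE Hl mxE.
by rewrite !Hl'; apply/eqP; ring.
Qed.

(* A relation with a nonzero coefficient on g puts the image of g in the
   span of the other two. *)
Lemma dimR_triple_le2 (g h i : 'I_m) (a b c : int) :
  a != 0 -> a *: v g + b *: v h + c *: v i = 0 -> (dimR R v [:: g; h; i] <= 2)%N.
Proof.
move=> an0 Rel; rewrite /dimR /= span_cons.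
set vR := fun x => map_mx (fun z : int => z%:~R : R) (v x).
have aR : (a%:~R : R) != 0 by rewrite intr_eq0.
have Eg : vR g = (- b%:~R / a%:~R) *: vR h + (- c%:~R / a%:~R) *: vR i.
  apply/rowP => l; rewrite !mxE.
  move/rowP: Rel => /(_ l); rewrite !mxE => E.
  have E' : a%:~R * (v g 0 l)%:~R + b%:~R * (v h 0 l)%:~R
            + c%:~R * (v i 0 l)%:~R = 0 :> R by rewrite -!intrM -!intrD E.
  transitivity ((v g 0 l)%:~R - (a%:~R * (v g 0 l)%:~R + b%:~R * (v h 0 l)%:~R
                                 + c%:~R * (v i 0 l)%:~R) / a%:~R : R).
    by rewrite E' mul0r subr0.
  by field.
have Hin : vR g \in << [:: vR h; vR i] >>%VS.
  by rewrite Eg; apply: memvD; apply: memvZ; apply: memv_span; rewrite !inE eqxx ?orbT.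
by rewrite (addv_idPr _) ?dim_span // -memvE.
Qed.

Lemma dimR_pair_le_triple (g h i : 'I_m) :
  (dimR R v [:: g; h] <= dimR R v [:: g; h; i])%N.
Proof.
by rewrite /dimR /=; apply/dimvS/sub_span => x; rewrite !inE => /orP [->|->]; rewrite ?orbT.
Qed.

Lemma relation_shape (w : seq ('I_m * int)) :
  (forall g, v g != 0) ->
  (forall g h (a b : int), g != h -> a *: v g + b *: v h = 0 -> (a == 0) && (b == 0)) ->
  w != [::] -> normal_form w -> \sum_(e <- w) v e.1 *~ e.2 = 0 -> (size w <= 3)%N ->
  size w = 3 /\ dimR R v (map fst w) = 2.
Proof.
move=> v_nz v_indep; case: w => [|[g a] [|[h b] [|[i c] [|e w]]]] //= _.
- rewrite /normal_form /= andbT => an0; rewrite big_seq1 scale_intE => E.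
  have /eqP := v_nz g; case; apply/rowP => j.
  move/rowP: E => /(_ j); rewrite !mxE => /eqP.
  by rewrite mulf_eq0 (negbTE an0) => /eqP.
- rewrite /normal_form /= !inE andbT => /and4P [ngh an0 _ _].
  rewrite !big_cons big_nil addr0 !scale_intE => /(v_indep _ _ _ _ ngh).
  by rewrite (negbTE an0).
rewrite /normal_form /= !inE andbT negb_or.
move=> /and5P [/andP [/andP [ngh _] _] an0 _ _ _].
rewrite !big_cons big_nil addr0 !scale_intE addrA => E _.
split => //; apply/eqP; rewrite eqn_leq (dimR_triple_le2 an0 E) /= ltnNge.
apply/negP => /(leq_trans (dimR_pair_le_triple g h i)) /dimR_pair_dependent.
case=> a' [b' [nz Rel]].
by move: nz; rewrite -negb_and (v_indep _ _ _ _ ngh Rel).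
Qed.

End Dimension.

Section Leadsto.
Variable m : nat.
Implicit Types r w : seq ('I_m * int).

Lemma leadsto_evalz (V : zmodType) (f : 'I_m -> V) r w :
  leadsto r w -> evalz f (syl_word w) = evalz f (syl_word r).
Proof.
case=> _ [u Hu]; rewrite -(evalz_pres (rels := [::]) _ Hu) //.
by rewrite !evalz_cat evalz_inv addrCA subrr addr0.
Qed.

Definition exp_sum (x : 'I_m) w : int := \sum_(e <- w) ((e.1 == x)%:R : int) *~ e.2.

Lemma exp_sum_notin x w : x \notin map fst w -> exp_sum x w = 0.
Proof.
move=> Hx; rewrite /exp_sum big1_seq // => e /= He.
suff /negbTE -> : e.1 != x by rewrite mul0rz.
by apply: contra Hx => /eqP <-; apply: map_f.
Qed.

Lemma exp_sum_normal x w : normal_form w -> x \in map fst w -> exp_sum x w != 0.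
Proof.
elim: w => [|e w IH] //= /andP [/= /andP [He Hu] /andP [He2 Ha]].
rewrite /exp_sum big_cons -/(exp_sum x w) inE; case: eqP => [E _|/eqP ne] /=.
  by rewrite E eqxx exp_sum_notin // addr0 intz.
rewrite [e.1 == x]eq_sym (negbTE ne) mul0rz add0r; apply: IH.
by rewrite /normal_form Hu Ha.
Qed.

Lemma leadsto_size r w : leadsto r w -> (size w <= size r)%N.
Proof.
move=> Hrw; rewrite -(size_map fst w) -(size_map fst r).
apply: uniq_leq_size => [|x Hx]; first by case/andP: (proj1 Hrw).
have E : exp_sum x w = exp_sum x r.
  by have := leadsto_evalz (fun y => (y == x)%:R : int) Hrw; rewrite !evalz_syl.
apply: contraT => /exp_sum_notin r0.
by have := exp_sum_normal (proj1 Hrw) Hx; rewrite E r0 eqxx.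
Qed.

End Leadsto.

Theorem mainTheorem11 (R : realType) (n m : nat)
  (rels : seq (seq ('I_m * int))) (v : 'I_m -> 'rV[int]_n) :
  three_pres rels ->
  pres_iso rels v ->
  (forall (m' : nat) (rels' : seq (seq ('I_m' * int))) (v' : 'I_m' -> 'rV[int]_n),
      three_pres rels' -> pres_iso rels' v' -> (m <= m')%N) ->
  forall r, r \in rels ->
  forall w, leadsto r w -> w != [::] ->
    size w = 3%N /\ dimR R v (map fst w) = 2%N.
Proof.
move=> T3 Hiso Hmin r Hr w Hrw Hw.
have [Hrel _ _] := Hiso.
apply: (relation_shape R (minimal_nonzero T3 Hiso Hmin)
                         (minimal_independent T3 Hiso Hmin) Hw (proj1 Hrw)).
- by rewrite -evalz_syl (leadsto_evalz _ Hrw); apply: Hrel.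
- exact: leq_trans (leadsto_size Hrw) (allP T3 r Hr).
Qed.
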